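(* Let $K\ge 1$ and $T\ge 2$ be integers and let $a_1,\dots,a_{T-1}$ be binary sequences of period $K$. Define $s=I(0_K,a_1,\dots,a_{T-1})$ and $s'=I(1_K,a_1,\dots,a_{T-1})$, binary sequences of period $KT$. Let $0\le\tau<KT$ with $\tau=\tau_1T+\tau_2$, where $1\le\tau_2\le T-1$. Then $$R_{s',s}(\tau)=R_{s,s'}(\tau)\iff d(a_{T-\tau_2})=d(a_{\tau_2}),$$ and $$R_s(\tau)=R_{s'}(\tau)\iff d(a_{T-\tau_2})=-d(a_{\tau_2}).$$
   Context: A binary sequence of period $n$ is a map $\mathbb{Z}\to\{0,1\}$ with period $n$. For binary sequences $a,b$ of period $n$, $R_{a,b}(\tau)=\sum_{t=0}^{n-1}(-1)^{a(t)+b(t+\tau)}$ (indices mod $n$), and $R_a=R_{a,a}$. For binary sequences $b_0,\dots,b_{T-1}$ of period $K$, $I(b_0,\dots,b_{T-1})$ is the binary sequence $v$ of period $KT$ with $v(iT+j)=b_j(i)$ for $0\le i\le K-1$, $0\le j\le T-1$. $0_K$, $1_K$ are the all-zero and all-one sequences of period $K$. For a binary sequence $a$ of period $K$, $d(a)=2|\{0\le t\le K-1:a(t)=1\}|-K$. *)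

From mathcomp Require Import all_boot all_order all_algebra.
Set Implicit Arguments. Unset Strict Implicit. Unset Printing Implicit Defensive.
Import Order.TTheory GRing.Theory Num.Theory.
Local Open Scope ring_scope.

(* A binary sequence of period n is modelled as a function a : nat -> bool,
   read modulo n: its value at the integer t is a (t mod n).  Only the
   values a 0, ..., a (n-1) matter. *)

Definition corr (n : nat) (a b : nat -> bool) (tau : nat) : int :=
  \sum_(t < n) (if a (t %% n)%N == b ((t + tau) %% n)%N then 1 else -1).

Definition acorr (n : nat) (a : nat -> bool) (tau : nat) : int := corr n a a tau.

Definition dbal (K : nat) (a : nat -> bool) : int :=
  2 * (#|[set t : 'I_K | a t]|)%:Z - K%:Z.

Definition interleave (K T : nat) (b : nat -> nat -> bool) : nat -> bool :=
  fun t => let u := (t %% (K * T))%N in b (u %% T)%N ((u %/ T) %% K)%N.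

Definition fam (c : bool) (a : nat -> nat -> bool) : nat -> nat -> bool :=
  fun j => if j == 0%N then (fun _ => c) else a j.

From mathcomp Require Import all_boot all_order all_algebra.
From mathcomp Require Import zify.
Set Implicit Arguments. Unset Strict Implicit. Unset Printing Implicit Defensive.
Import Order.TTheory GRing.Theory Num.Theory.
Local Open Scope ring_scope.

(* Within one period, s and s' differ exactly at the positions t = 0 mod T,
   where s is 0 and s' is 1.  As tau is not a multiple of T, no summand of a
   correlation sees two such positions at once, so R_{s',s}(tau) - R_{s,s'}(tau)
   and R_s(tau) - R_s'(tau) are 2(A - B) and -2(A + B), where A collects the
   signs of s at t + tau for t = 0 mod T and B those of s at t for
   t + tau = 0 mod T.  These run over one full period of a_{tau2} and of
   a_{T-tau2} respectively, so A = d(a_{tau2}) and B = d(a_{T-tau2}). *)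

Definition sgnb (b : bool) : int := if b then 1 else -1.

Definition agree (b c : bool) : int := if b == c then 1 else -1.

Lemma dbal_sum K (b : nat -> bool) : dbal K b = \sum_(k < K) sgnb (b k).
Proof.
rewrite /dbal cardsE -sum1_card big_mkcond /=.
rewrite (eq_bigr (fun k : 'I_K => 2 * (b k : nat)%:Z - 1)); last first.
  by move=> k _; rewrite /sgnb; case: (b k).
rewrite sumrB sumr_const card_ord -mulr_sumr.
congr (2 * _ - _); last by rewrite natz.
rewrite (big_morph Posz PoszD (erefl _)).
by apply: eq_bigr => k _; rewrite unfold_in; case: (b k).
Qed.

Lemma big_ord_mul (g : nat -> int) K T :
  \sum_(t < K * T) g t = \sum_(i < K) \sum_(j < T) g (i * T + j)%N.
Proof.
elim: K => [|K IH]; first by rewrite mul0n !big_ord0.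
by rewrite mulSnr big_split_ord /= IH big_ord_recr.
Qed.

Lemma sum_residue_class (g : nat -> int) K T r : (r < T)%N ->
  \sum_(t < K * T) (if (t %% T == r)%N then g t else 0) =
  \sum_(i < K) g (i * T + r)%N.
Proof.
move=> rT; rewrite (big_ord_mul (fun t => if (t %% T == r)%N then g t else 0)).
apply: eq_bigr => i _.
rewrite (bigD1 (Ordinal rT)) //= modnMDl modn_small // eqxx big1 ?addr0 //.
move=> j /= ji; rewrite modnMDl modn_small //.
by case: eqP => // jr; case/eqP: ji; apply: val_inj.
Qed.

Lemma sum_rot_mod (g : nat -> int) K c : (0 < K)%N ->
  \sum_(i < K) g ((i + c) %% K)%N = \sum_(k < K) g k.
Proof.
move=> K_gt0; pose h (i : 'I_K) : 'I_K := Ordinal (ltn_pmod (i + c) K_gt0).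
rewrite [RHS](reindex_inj (h := h)) // => i j /(congr1 val) /= /eqP.
by rewrite eqn_modDr !modn_small // => /eqP ij; apply: val_inj.
Qed.

Lemma interleave_mod K T b x :
  interleave K T b (x %% (K * T))%N = interleave K T b x.
Proof. by rewrite /interleave modn_mod. Qed.

Lemma interleaveE K T b q j : (j < T)%N ->
  interleave K T b (q * T + j)%N = b j (q %% K)%N.
Proof.
move=> jT; have T_gt0 : (0 < T)%N by apply: leq_ltn_trans jT.
rewrite /interleave modn_dvdm ?dvdn_mull // modnMDl modn_small //.
rewrite divn_modl ?dvdn_mull // mulnK // modn_mod.
by rewrite divnMDl // divn_small // addn0.
Qed.

Lemma interleave_fam0 K T a x : (x %% T == 0)%N ->
  interleave K T (fam false a) x = false.
Proof. by rewrite /interleave /fam modn_dvdm ?dvdn_mull // => ->. Qed.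

Lemma interleave_fam1 K T a x :
  interleave K T (fam true a) x =
  (x %% T == 0)%N || interleave K T (fam false a) x.
Proof. by rewrite /interleave /fam modn_dvdm ?dvdn_mull //; case: eqP. Qed.

Lemma agree_cross_mark (d0 d1 p q : bool) :
  ~~ (d0 && d1) -> (d0 -> p = false) -> (d1 -> q = false) ->
  agree (d0 || p) q - agree p (d1 || q) =
  2 * ((if d0 then sgnb q else 0) - (if d1 then sgnb p else 0)).
Proof.
case: d0 d1 => [] [] //= _ p0 q0; rewrite ?(p0 isT) ?(q0 isT);
  by case: p q {p0 q0} => [] [].
Qed.

Lemma agree_auto_mark (d0 d1 p q : bool) :
  ~~ (d0 && d1) -> (d0 -> p = false) -> (d1 -> q = false) ->
  agree p q - agree (d0 || p) (d1 || q) =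
  - 2 * ((if d0 then sgnb q else 0) + (if d1 then sgnb p else 0)).
Proof.
case: d0 d1 => [] [] //= _ p0 q0; rewrite ?(p0 isT) ?(q0 isT);
  by case: p q {p0 q0} => [] [].
Qed.

Section ShiftedMarks.

Variables (K T : nat) (a : nat -> nat -> bool) (tau1 tau2 : nat).
Hypotheses (K_gt0 : (0 < K)%N) (tau2_gt0 : (0 < tau2)%N) (tau2_ltT : (tau2 < T)%N).

Let N := (K * T)%N.
Let tau := (tau1 * T + tau2)%N.
Let s := interleave K T (fam false a).
Let s' := interleave K T (fam true a).

Let marked (t : nat) : bool := ((t %% N) %% T == 0)%N.
Let A := \sum_(t < N) (if marked t then sgnb (s ((t + tau) %% N)) else 0).
Let B := \sum_(t < N) (if marked (t + tau) then sgnb (s (t %% N)) else 0).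

Lemma marked_shift t : marked (t + tau) = ((t %% T)%N == (T - tau2)%N).
Proof.
rewrite /marked modn_dvdm ?dvdn_mull // addnCA modnMDl -modnDml.
have := ltn_pmod t (leq_ltn_trans (leq0n _) tau2_ltT).
move: (t %% T)%N => j jT; apply/eqP/eqP => [|->]; last by rewrite subnK ?modnn // ltnW.
case: (ltnP (j + tau2) T) => h; first by rewrite modn_small //; lia.
have -> : (j + tau2 = (j + tau2 - T) + T)%N by lia.
rewrite modnDr modn_small; lia.
Qed.

Lemma marked_disjoint t : ~~ (marked t && marked (t + tau)).
Proof.
rewrite marked_shift /marked modn_dvdm ?dvdn_mull //.
by apply/negP => /andP[/eqP -> /eqP]; lia.
Qed.

Lemma s_at_mark t : marked t -> s (t %% N) = false.
Proof. exact: interleave_fam0. Qed.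

Lemma s'E t : s' (t %% N) = marked t || s (t %% N).
Proof. by rewrite /s' /marked interleave_fam1. Qed.

Lemma sum_at_marks : A = dbal K (a tau2).
Proof.
rewrite /A /marked (eq_bigr (fun t : 'I_N => if (t %% T == 0)%N
    then sgnb (s (t + tau)%N) else 0)); last first.
  by move=> t _; rewrite modn_dvdm ?dvdn_mull // /s interleave_mod.
rewrite /N (sum_residue_class (fun t => sgnb (s (t + tau)))) //; last by lia.
rewrite dbal_sum.
rewrite -(sum_rot_mod (fun k => sgnb (a tau2 k)) tau1 K_gt0).
apply: eq_bigr => i _; rewrite /s /tau addn0 addnA -mulnDl interleaveE //.
by rewrite /fam gtn_eqF.
Qed.

Lemma sum_at_shifted_marks : B = dbal K (a (T - tau2)%N).
Proof.
rewrite /B (eq_bigr (fun t : 'I_N => if (t %% T == T - tau2)%N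
    then sgnb (s t) else 0)); last first.
  by move=> t _; rewrite marked_shift (modn_small (ltn_ord t)).
rewrite /N (sum_residue_class (fun t => sgnb (s t))); last by lia.
rewrite dbal_sum; apply: eq_bigr => i _.
rewrite /s interleaveE ?modn_small //; last by lia.
by rewrite /fam; case: eqP => //; lia.
Qed.

Lemma corr_cross_diff :
  corr N s' s tau - corr N s s' tau = 2 * (dbal K (a tau2) - dbal K (a (T - tau2)%N)).
Proof.
rewrite -sum_at_marks -sum_at_shifted_marks /corr -!sumrB mulr_sumr.
apply: eq_bigr => t _; rewrite !s'E.
exact: agree_cross_mark (marked_disjoint t) (@s_at_mark _) (@s_at_mark _).
Qed.

Lemma acorr_diff :
  acorr N s tau - acorr N s' tau = - 2 * (dbal K (a tau2) + dbal K (a (T - tau2)%N)).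
Proof.
rewrite -sum_at_marks -sum_at_shifted_marks /acorr /corr -sumrB -big_split mulr_sumr.
apply: eq_bigr => t _; rewrite !s'E.
exact: agree_auto_mark (marked_disjoint t) (@s_at_mark _) (@s_at_mark _).
Qed.

End ShiftedMarks.

Theorem corollary1 (K T : nat) (a : nat -> nat -> bool)
  (tau tau1 tau2 : nat) :
  (1 <= K)%N -> (2 <= T)%N ->
  (tau < K * T)%N -> tau = (tau1 * T + tau2)%N ->
  (1 <= tau2)%N -> (tau2 <= T - 1)%N ->
  let s := interleave K T (fam false a) in
  let s' := interleave K T (fam true a) in
  (corr (K * T) s' s tau = corr (K * T) s s' tau <->
     dbal K (a (T - tau2)%N) = dbal K (a tau2)) /\
  (acorr (K * T) s tau = acorr (K * T) s' tau <->
     dbal K (a (T - tau2)%N) = - dbal K (a tau2)).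
Proof.
move=> K_gt0 T_ge2 _ -> tau2_gt0 tau2_le s s'.
have tau2_ltT : (tau2 < T)%N by lia.
have := corr_cross_diff a tau1 K_gt0 tau2_gt0 tau2_ltT.
have := acorr_diff a tau1 K_gt0 tau2_gt0 tau2_ltT.
rewrite -/s -/s'; split; lia.
Qed.
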